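(* Let $n\ge 2$, let $\alpha_1,\dots,\alpha_n\in\mathbb C$, and let $T\in\mathcal L(\mathcal P_n)$ be $T=I+\alpha_1D+\alpha_2D^2+\cdots+\alpha_nD^n$. Then $\alpha_1=0$ if and only if there exists a constant $\Gamma_T>0$ such that for every $f\in\mathcal P_n$ of degree at least $2$ with simple roots, $$\tau(f)\,R_T(f)<\Gamma_T .$$
   Context: $\mathcal P_n$ is the complex vector space of polynomials of degree at most $n$, $\mathcal L(\mathcal P_n)$ the linear operators on it, $D$ the differentiation operator and $I$ the identity. For a nonzero polynomial $f$, $Z(f)$ is its set of roots. For a nonconstant $f\in\mathcal P_n$, $R_T(f):=\max_{w\in Z(Tf)}\min_{x\in Z(f)}|w-x|$ (equivalently, the least $r\ge0$ with $Z(Tf)\subset Z(f)+\mathbb D(r)$, where $\mathbb D(r)=\{z:|z|\le r\}$ and $A+B=\{u+v:u\in A,v\in B\}$). For a polynomial $f$ of degree at least $2$ with at least two distinct roots, $\tau(f):=\min\{|w-v|: w\in Z(f),\ v\in Z(f')\setminus\{w\}\}$. ''Simple roots'' means all roots have multiplicity one. *)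

(* Complex numbers are modelled by an arbitrary
   numClosedFieldType (e.g. algC). *)
From HB Require Import structures.
From mathcomp Require Import all_boot all_order all_algebra.
Set Implicit Arguments. Unset Strict Implicit. Unset Printing Implicit Defensive.
Import Order.TTheory GRing.Theory Num.Theory.
Local Open Scope ring_scope.

Section Defs.
Variable C : numClosedFieldType.

(* Z(f): the roots of f, listed with multiplicity (a root list such that
   f = lead_coef f * prod (X - z)).  For f = 0 this list is meaningless but
   never used. *)
Definition roots (f : {poly C}) : seq C := sval (closed_field_poly_normal f).

Definition minseq (s : seq C) : C := \big[Num.min/head 0 s]_(x <- s) x.

Definition distZ (w : C) (f : {poly C}) : C := minseq [seq `|w - x| | x <- roots f].

(* T = I + alpha_1 D + ... + alpha_n D^n  (alpha_0 is ignored) *)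
Definition Top (n : nat) (alpha : nat -> C) (f : {poly C}) : {poly C} :=
  f + \sum_(1 <= k < n.+1) alpha k *: f^`(k).

Definition RT (n : nat) (alpha : nat -> C) (f : {poly C}) : C :=
  \big[Num.max/0]_(w <- roots (Top n alpha f)) distZ w f.

Definition tau (f : {poly C}) : C :=
  minseq [seq `|wv.1 - wv.2| | wv <- [seq (w, v) | w <- roots f, v <- roots f^`()]
                              & wv.1 != wv.2].

Definition simple_roots (f : {poly C}) : Prop :=
  forall z : C, root f z -> mup z f = 1%N.

End Defs.

From Pilot Require Import Defs.
From HB Require Import structures.
From mathcomp Require Import all_boot all_order all_algebra zify ring.
Import Order.TTheory GRing.Theory Num.Theory.
Local Open Scope ring_scope.

(* Let w be a root of T f, r = dist(w, Z(f)) and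
   p = dist(w, Z(f')).  The derivative estimate r^k |f^(k)(w)| <= m^k |f(w)|
   (m = deg f, valid when all roots of f are at distance >= r from w) shows
   r <= K := 1 + sum |a_k| n^k.  When a_1 = 0 the equation f(w) = -sum a_k
   f^(k)(w) involves only derivatives of f' of order >= 1, and the same
   estimate for f' and for f gives p r <= K + n A with A = sum |a_k| n^(k-1).
   Since a simple root of f is not a root of f', tau(f) <= r + p, hence
   tau(f) r <= K^2 + K + n A, and R_T(f) is the maximum of such r.

   If a_1 != 0, the polynomial f = X^2 - l^2 has tau(f) = l, and
   T f is a monic quadratic whose roots sum to -2 a_1; for l >= 2|a_1| one of
   them is at distance >= |a_1| from {l, -l}, so tau(f) R_T(f) >= l |a_1|,
   which is unbounded in l. *)

Set Implicit Arguments.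
Unset Strict Implicit.
Unset Printing Implicit Defensive.

(* [roots] also names an operation on relations in the boot library. *)
Local Notation roots := Defs.roots.

Section RealExtrema.
Variable R : numDomainType.

Lemma bigmin_le_real (I : eqType) (r : seq I) (x0 : R) (F : I -> R) i :
  x0 \is Num.real -> {in r, forall j, F j \is Num.real} -> i \in r ->
  \big[Num.min/x0]_(j <- r) F j <= F i.
Proof.
move=> x0R; elim: r => [//|a r IH] FR; rewrite inE big_cons.
have aR : F a \is Num.real by apply: FR; rewrite inE eqxx.
have mR : \big[Num.min/x0]_(j <- r) F j \is Num.real.
  by rewrite big_seq; apply: bigmin_real => // j jr; apply: FR; rewrite inE jr orbT.
have {}IH := IH (fun j jr => FR j (mem_behead (s := a :: r) jr)).
case/orP=> [/eqP -> | ir]; case: (real_leP aR mR) => ha //.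
- exact: ltW.
- exact: le_trans ha (IH ir).
- exact: IH.
Qed.

Lemma bigmax_ge_real (I : eqType) (r : seq I) (x0 : R) (F : I -> R) i :
  x0 \is Num.real -> {in r, forall j, F j \is Num.real} -> i \in r ->
  F i <= \big[Num.max/x0]_(j <- r) F j.
Proof.
move=> x0R; elim: r => [//|a r IH] FR; rewrite inE big_cons.
have aR : F a \is Num.real by apply: FR; rewrite inE eqxx.
have mR : \big[Num.max/x0]_(j <- r) F j \is Num.real.
  by rewrite big_seq; apply: bigmax_real => // j jr; apply: FR; rewrite inE jr orbT.
have {}IH := IH (fun j jr => FR j (mem_behead (s := a :: r) jr)).
case/orP=> [/eqP -> | ir]; case: (real_leP aR mR) => ha //.
- exact: IH.
- exact: le_trans (IH ir) (ltW ha).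
Qed.

End RealExtrema.

Section RootLists.
Variable C : numClosedFieldType.
Implicit Types (p f : {poly C}) (s : seq C).

Lemma roots_spec p : p = lead_coef p *: \prod_(z <- roots p) ('X - z%:P).
Proof. exact: (svalP (closed_field_poly_normal p)). Qed.

Lemma mem_roots p x : p != 0 -> (x \in roots p) = root p x.
Proof.
move=> pn0; rewrite [in RHS](roots_spec p) rootZ ?lead_coef_eq0 //.
by rewrite root_prod_XsubC.
Qed.

Lemma size_roots p : p != 0 -> size (roots p) = (size p).-1.
Proof.
move=> pn0; rewrite [in RHS](roots_spec p) size_scale ?lead_coef_eq0 //.
by rewrite size_prod_XsubC.
Qed.

Lemma roots_root p x : x \in roots p -> root p x.
Proof. by case: (eqVneq p 0) => [-> | /mem_roots ->]; rewrite ?root0. Qed.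

Lemma roots_neq_nil p : (2 <= size p)%N -> roots p != [::].
Proof.
move=> p2; have pn0 : p != 0 by rewrite -size_poly_gt0 ltnW.
by rewrite -size_eq0 size_roots //; case: (size p) p2 => [|[]].
Qed.

Lemma minseq_mem s : s != [::] -> minseq s \in s.
Proof.
move=> sn0; rewrite /minseq big_seq; apply: (big_ind (fun x => x \in s)) => //.
- by case: s sn0 => //= a s _; rewrite mem_head.
- by move=> x y xs ys; rewrite minElt; case: ifP.
Qed.

Lemma minseq_le s y : {in s, forall x, x \is Num.real} -> y \in s -> minseq s <= y.
Proof.
move=> sR ys; rewrite /minseq; apply: bigmin_le_real => //.
by case: s sR ys => //= a s sR _; apply: sR; rewrite mem_head.
Qed.

Lemma distZ_attained w f : roots f != [::] ->
  exists2 z, z \in roots f & distZ w f = `|w - z|.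
Proof.
move=> rn0; have /mapP [z zr ->] : distZ w f \in [seq `|w - x| | x <- roots f].
  by apply: minseq_mem; rewrite -size_eq0 size_map size_eq0.
by exists z.
Qed.

Lemma distZ_le w f z : z \in roots f -> distZ w f <= `|w - z|.
Proof.
move=> zr; apply: minseq_le; last exact: map_f.
by move=> x /mapP [u _ ->]; apply: normr_real.
Qed.

Lemma distZ_ge0 w f : 0 <= distZ w f.
Proof.
have [rf0 | /(distZ_attained w) [z _ -> //]] := eqVneq (roots f) [::].
by rewrite /distZ rf0 /minseq big_nil.
Qed.

Lemma tau_pair_mem f z v : z \in roots f -> v \in roots f^`() -> z != v ->
  `|z - v| \in [seq `|wv.1 - wv.2| | wv <- [seq (w, v) | w <- roots f, v <- roots f^`()]
                                   & wv.1 != wv.2].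
Proof.
move=> zr vr zv; apply: (map_f (fun wv : C * C => `|wv.1 - wv.2|) (x := (z, v))).
by rewrite mem_filter /= zv; apply/allpairsP; exists (z, v).
Qed.

Lemma tau_le f z v : z \in roots f -> v \in roots f^`() -> z != v ->
  tau f <= `|z - v|.
Proof.
move=> zr vr zv; apply: minseq_le; last exact: tau_pair_mem.
by move=> x /mapP [u _ ->]; apply: normr_real.
Qed.

Lemma tau_attained f z v : z \in roots f -> v \in roots f^`() -> z != v ->
  exists z' v', [/\ z' \in roots f, v' \in roots f^`() & tau f = `|z' - v'|].
Proof.
move=> zr vr zv; move: (tau_pair_mem zr vr zv); set L := map _ _ => hL.
have /minseq_mem : L != [::] by case: L hL.
case/mapP => [[a b]]; rewrite mem_filter /= => /andP [_].
case/allpairsP => [[c d] [/= cr dr [-> ->]]] tauE.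
by exists c, d; rewrite /tau -/L tauE.
Qed.

End RootLists.

Section DerivativeEstimate.
Variable C : numClosedFieldType.
Implicit Types (p h : {poly C}) (s : seq C).

Lemma derivn_XsubC_mul (z : C) h k :
  (('X - z%:P) * h)^`(k) = ('X - z%:P) * h^`(k) + h^`(k.-1) *+ k.
Proof.
elim: k => [|k IH]; first by rewrite !derivn0 mulr0n addr0.
rewrite derivnS IH derivD derivM derivXsubC mul1r derivMn.
case: k IH => [|k] IH; first by rewrite mulr0n derivn0 /= addr0 addrC mulr1n.
by rewrite /= -!derivnS [X in _ = _ + X]mulrS addrCA addrA.
Qed.

(* The two leading terms of the binomial expansion of (N + 1)^(j + 1). *)
Lemma expn_succ_ge (N j : nat) : (N ^ j.+1 + j.+1 * N ^ j <= N.+1 ^ j.+1)%N.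
Proof.
elim: j => [|j IH]; first by rewrite !expn1 expn0 muln1 addn1.
rewrite [(N.+1 ^ j.+2)%N]expnS; apply: leq_trans (leq_mul (leqnn N.+1) IH).
rewrite !expnS; nia.
Qed.

Lemma prod_derivn_estimate s (w r : C) k : 0 <= r ->
  (forall z, z \in s -> r <= `|w - z|) ->
  `|(\prod_(z <- s) ('X - z%:P))^`(k).[w]| * r ^+ k <=
  (size s)%:R ^+ k * `|(\prod_(z <- s) ('X - z%:P)).[w]|.
Proof.
move=> r0; elim: s k => [|z s IH] k hs.
  rewrite big_nil; case: k => [|k]; first by rewrite derivn0 expr0 mulr1 mul1r.
  by rewrite -polyC1 derivnC horner0 normr0 mul0r mulr_ge0 ?exprn_ge0 ?normr_ge0.
have {}IH : forall k, _ := IH ^~ (fun y ys => hs y (mem_behead (s := z :: s) ys)).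
have rz : r <= `|w - z| by apply: hs; rewrite mem_head.
rewrite big_cons; set h := \prod_(_ <- _) _.
case: k => [|j]; first by rewrite derivn0 expr0 mulr1 mul1r.
rewrite derivn_XsubC_mul [j.+1.-1]/= hornerD hornerM hornerMn hornerXsubC.
set a := `|w - z|; set H := `|h.[w]|; set N : C := (size s)%:R.
have a0 : 0 <= a by apply: normr_ge0.
apply: le_trans
  (_ : (a * `|h^`(j.+1).[w]| + `|h^`(j).[w]| *+ j.+1) * r ^+ j.+1 <= _).
  apply: ler_wpM2r; first exact: exprn_ge0.
  by apply: le_trans (ler_normD _ _) _; rewrite normrM normrMn.
rewrite mulrDl mulrnAl -mulrA.
apply: le_trans (_ : a * (N ^+ j.+1 * H) + (N ^+ j * H * a) *+ j.+1 <= _).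
  apply: lerD; first exact: ler_wpM2l (IH _).
  apply: ler_wMn2r; rewrite exprSr mulrA.
  by apply: ler_pM (IH _) rz; rewrite ?mulr_ge0 ?exprn_ge0 ?normr_ge0.
have -> : a * (N ^+ j.+1 * H) + N ^+ j * H * a *+ j.+1 =
    ((size s ^ j.+1 + j.+1 * size s ^ j)%N)%:R * (a * H).
  rewrite natrD natrM !natrX mulrDl; congr (_ + _); first by rewrite mulrCA.
  by rewrite -mulr_natl -!mulrA [H * a]mulrC.
rewrite hornerM hornerXsubC normrM -/a -/H /= -natrX.
by rewrite ler_wpM2r ?ler_nat ?mulr_ge0 ?normr_ge0 ?expn_succ_ge.
Qed.

Lemma derivn_estimate p (w r : C) k : p != 0 -> 0 <= r ->
  (forall z, z \in roots p -> r <= `|w - z|) ->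
  `|p^`(k).[w]| * r ^+ k <= ((size p).-1)%:R ^+ k * `|p.[w]|.
Proof.
move=> pn0 r0 hz; have pE := roots_spec p.
set c := lead_coef p in pE; set P := \prod_(_ <- _) _ in pE.
have -> : p^`(k).[w] = c * P^`(k).[w] by rewrite {1}pE derivnZ hornerZ.
have -> : p.[w] = c * P.[w] by rewrite {1}pE hornerZ.
rewrite -(size_roots pn0) !normrM -mulrA [X in _ <= X]mulrCA.
by apply: ler_wpM2l; [exact: normr_ge0 | exact: prod_derivn_estimate].
Qed.

Lemma derivn_estimate_ge1 n p (w r : C) k : p != 0 -> ((size p).-1 <= n)%N ->
  1 <= r -> (0 < k)%N -> (forall z, z \in roots p -> r <= `|w - z|) ->
  `|p^`(k).[w]| * r <= n%:R ^+ k * `|p.[w]|.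
Proof.
move=> pn0 pn r1 k0 hz; have r0 : 0 <= r := le_trans ler01 r1.
apply: le_trans (_ : `|p^`(k).[w]| * r ^+ k <= _).
  by apply: ler_wpM2l; rewrite ?normr_ge0 // -{1}[r]expr1 ler_eXnr.
apply: le_trans (derivn_estimate k pn0 r0 hz) _.
by apply: ler_wpM2r; rewrite ?normr_ge0 // -!natrX ler_nat leq_exp2r.
Qed.

End DerivativeEstimate.

Lemma size_deriv_num (R : numDomainType) (p : {poly R}) : size p^`() = (size p).-1.
Proof.
have [p1 | p2] := leqP (size p) 1.
  by rewrite (size1_polyC p1) derivC size_poly0 size_polyC; case: (_ != 0).
have s1 : (0 < (size p).-1)%N by case: (size p) p2 => [|[]].
rewrite /deriv size_poly_eq // prednK // mulrn_eq0 negb_or -lt0n s1.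
by rewrite -lead_coefE lead_coef_eq0 -size_poly_gt0 ltnW.
Qed.

Lemma simple_root_deriv (F : fieldType) (f : {poly F}) (z : F) : f != 0 ->
  root f z -> mup z f = 1%N -> ~~ root f^`() z.
Proof.
move=> fn0 /factor_theorem [q fE] mup1.
have qz : ~~ root q z.
  apply: contra_eqN mup1 => /factor_theorem [q2 qE].
  have : (2 <= mup z f)%N by rewrite mup_geq // fE qE -mulrA -expr2 dvdp_mull.
  by case: (mup z f) => [|[]].
by rewrite fE derivM derivXsubC mulr1 rootE !hornerE subrr mulr0 add0r.
Qed.

Section ForwardBound.
Variables (C : numClosedFieldType) (n : nat) (alpha : nat -> C).
Implicit Types (f : {poly C}) (w : C).

(* The constants of the bound: B = sum |a_k| n^k, A = sum |a_k| n^(k-1),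
   K = 1 + B bounds the distance from a root of [T f] to the roots of [f],
   and Gamma0 = K^2 + K + n A is the final bound on tau(f) R_T(f). *)
Definition coefB : C := \sum_(1 <= k < n.+1) `|alpha k| * n%:R ^+ k.
Definition coefA : C := \sum_(1 <= k < n.+1) `|alpha k| * n%:R ^+ k.-1.
Definition coefK : C := 1 + coefB.
Definition Gamma0 : C := coefK * coefK + coefK + n%:R * coefA.

Lemma coefB_ge0 : 0 <= coefB.
Proof. by apply: sumr_ge0 => k _; rewrite mulr_ge0 ?exprn_ge0 ?ler0n. Qed.

Lemma coefA_ge0 : 0 <= coefA.
Proof. by apply: sumr_ge0 => k _; rewrite mulr_ge0 ?exprn_ge0 ?ler0n. Qed.

Lemma coefK_ge0 : 0 <= coefK.
Proof. by rewrite /coefK addr_ge0 ?ler01 ?coefB_ge0. Qed.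

Lemma Gamma0_ge0 : 0 <= Gamma0.
Proof.
have K0 := coefK_ge0; have A0 := coefA_ge0; rewrite /Gamma0.
by do ![assumption | exact: ler0n | apply: addr_ge0 | apply: mulr_ge0].
Qed.

Lemma root_Top_norm f w : root (Top n alpha f) w ->
  `|f.[w]| <= \sum_(1 <= k < n.+1) `|alpha k| * `|f^`(k).[w]|.
Proof.
rewrite rootE /Top hornerD horner_sum addr_eq0 => /eqP ->.
rewrite normrN; apply: le_trans (ler_norm_sum _ _ _) _.
by apply: ler_sum => k _; rewrite hornerZ normrM.
Qed.

Lemma horner_neq0_far f w r : f != 0 -> 0 < r ->
  (forall z, z \in roots f -> r <= `|w - z|) -> f.[w] != 0.
Proof.
move=> fn0 r0 far; apply: contraTneq r0 => fw0.
have /far : w \in roots f by rewrite mem_roots // rootE fw0.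
by rewrite subrr normr0 => /le_gtF ->.
Qed.

Lemma distZ_Top_le f w : f != 0 -> (size f <= n.+1)%N ->
  root (Top n alpha f) w -> distZ w f <= coefK.
Proof.
move=> fn0 fn Tw; set r := distZ w f.
have far z : z \in roots f -> r <= `|w - z| by apply: distZ_le.
have rR : r \is Num.real := ger0_real (distZ_ge0 w f).
have [r1 | r1] := real_leP rR (real1 C).
  by apply: le_trans r1 _; rewrite lerDl coefB_ge0.
have fw0 : f.[w] != 0 by apply: horner_neq0_far (lt_trans ltr01 r1) far.
suff : `|f.[w]| * r <= coefB * `|f.[w]|.
  by rewrite mulrC ler_pM2r ?normr_gt0 // => /le_trans; apply; rewrite lerDr.
apply: le_trans (ler_wpM2r (distZ_ge0 w f) (root_Top_norm Tw)) _.
rewrite mulr_suml /coefB mulr_suml; apply: ler_sum_nat => k /andP [k1 _].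
rewrite -!mulrA ler_wpM2l ?normr_ge0 //.
apply: derivn_estimate_ge1 => //; first by rewrite -ltnS; case: (size f) fn.
exact: ltW.
Qed.

(* [tau f] is at most the sum of the distances from any point to the roots
   of [f] and to the roots of [f'], since a simple root of [f] is never a
   root of [f']. *)
Lemma tau_le_distZ f w : f != 0 -> (3 <= size f)%N -> simple_roots f ->
  tau f <= distZ w f + distZ w f^`().
Proof.
move=> fn0 f3 fsimple.
have f'2 : (2 <= size f^`())%N by rewrite size_deriv_num; case: (size f) f3 => [|[|[]]].
have [z zr ->] := distZ_attained w (roots_neq_nil (ltnW f3)).
have [v vr ->] := distZ_attained w (roots_neq_nil f'2).
have zv : z != v.
  have zf := roots_root zr; apply: contraTneq (simple_root_deriv fn0 zf (fsimple _ zf)).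
  by move=> ->; rewrite negbK (roots_root vr).
apply: le_trans (tau_le zr vr zv) _; rewrite [`|w - z|]distrC.
by rewrite -[z - v](subrKA w) ler_normD.
Qed.

(* When a_1 = 0, a root [w] of [T f] satisfies dist(w, Z(f')) dist(w, Z(f))
   <= K + n A: either dist(w, Z(f')) <= 1, or the estimates at [f] and [f']
   give |f(w)| p <= A |f'(w)| and |f'(w)| r <= n |f(w)|. *)
Lemma distZ_deriv_Top_le f w : alpha 1%N = 0 -> f != 0 ->
  (size f <= n.+1)%N -> (3 <= size f)%N -> root (Top n alpha f) w ->
  distZ w f^`() * distZ w f <= coefK + n%:R * coefA.
Proof.
move=> a1 fn0 fn f3 Tw; set r := distZ w f; set p := distZ w f^`().
have f'2 : (2 <= size f^`())%N by rewrite size_deriv_num; case: (size f) f3 => [|[|[]]].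
have f'n0 : f^`() != 0 by rewrite -size_poly_gt0 ltnW.
have fdeg : ((size f).-1 <= n)%N by rewrite -ltnS prednK ?size_poly_gt0.
have r0 : 0 <= r := distZ_ge0 w f.
have p0 : 0 <= p := distZ_ge0 w f^`().
have rK : r <= coefK := distZ_Top_le fn0 fn Tw.
have [p1 | p1] := real_leP (ger0_real p0) (real1 C).
  apply: le_trans (_ : 1 * r <= _); first exact: ler_wpM2r.
  by rewrite mul1r ler_wpDr ?mulr_ge0 ?ler0n ?coefA_ge0.
apply: le_trans (_ : n%:R * coefA <= _); last by rewrite lerDr coefK_ge0.
have f'w0 : f^`().[w] != 0.
  by apply: horner_neq0_far (lt_trans ltr01 p1) _ => // z; apply: distZ_le.
have hA : `|f.[w]| * p <= coefA * `|f^`().[w]|.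
  apply: le_trans (ler_wpM2r p0 (root_Top_norm Tw)) _.
  rewrite mulr_suml /coefA mulr_suml; apply: ler_sum_nat => k /andP [k1 _].
  case: k k1 => [|[|j]] // _; first by rewrite a1 normr0 !mul0r.
  rewrite -!mulrA ler_wpM2l ?normr_ge0 // derivSn.
  apply: (derivn_estimate_ge1 (k := j.+1)) => //.
  - by rewrite size_deriv_num (leq_trans (leq_pred _) fdeg).
  - exact: ltW.
  - by move=> z; apply: distZ_le.
have hB : `|f^`().[w]| * r <= n%:R * `|f.[w]|.
  apply: le_trans (_ : `|f^`(1).[w]| * r ^+ 1 <= _); first by rewrite derivn1 expr1.
  apply: le_trans (derivn_estimate 1 fn0 r0 (fun z zr => distZ_le w zr)) _.
  by rewrite expr1 ler_wpM2r ?normr_ge0 ?ler_nat.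
have f'pos : 0 < `|f^`().[w]| by rewrite normr_gt0.
rewrite -(ler_pM2l f'pos); apply: le_trans (_ : p * (n%:R * `|f.[w]|) <= _).
  by rewrite mulrCA ler_wpM2l.
apply: le_trans (_ : n%:R * (coefA * `|f^`().[w]|) <= _).
  by rewrite mulrCA [p * _]mulrC ler_wpM2l ?ler0n.
by rewrite mulrA mulrC.
Qed.

Lemma tau_distZ_Top_le f w : alpha 1%N = 0 -> (size f <= n.+1)%N ->
  (3 <= size f)%N -> simple_roots f -> root (Top n alpha f) w ->
  tau f * distZ w f <= Gamma0.
Proof.
move=> a1 fn f3 fsimple Tw; have fn0 : f != 0 by rewrite -size_poly_gt0 ltnW // ltnW.
have r0 : 0 <= distZ w f := distZ_ge0 w f.
apply: le_trans (ler_wpM2r r0 (tau_le_distZ w fn0 f3 fsimple)) _.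
rewrite mulrDl /Gamma0 -addrA; apply: lerD.
  by have rK := distZ_Top_le fn0 fn Tw; apply: ler_pM.
exact: distZ_deriv_Top_le.
Qed.

End ForwardBound.

Section RTBounds.
Variables (C : numClosedFieldType) (n : nat) (alpha : nat -> C).
Implicit Types (f : {poly C}) (w : C).

Lemma distZ_le_RT f w : w \in roots (Top n alpha f) -> distZ w f <= RT n alpha f.
Proof.
move=> wr; rewrite /RT; apply: (bigmax_ge_real (F := fun x => distZ x f)) => //.
by move=> x _; apply: ger0_real (distZ_ge0 x f).
Qed.

Lemma tau_RT_le f (G : C) : 0 <= G ->
  (forall w, w \in roots (Top n alpha f) -> tau f * distZ w f <= G) ->
  tau f * RT n alpha f <= G.
Proof.
move=> G0 hw; rewrite /RT big_seq.
apply: (big_ind (fun x => tau f * x <= G)) => [|x y hx hy|w /hw //].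
  by rewrite mulr0.
by rewrite maxElt; case: ifP.
Qed.

End RTBounds.

Section QuadraticExample.
Variables (C : numClosedFieldType) (l : C).
Hypothesis l_gt0 : 0 < l.

Definition twin_poly : {poly C} := \prod_(z <- [:: l; - l]) ('X - z%:P).

Lemma twin_polyE : twin_poly = 'X^2 - (l ^+ 2)%:P.
Proof. by rewrite /twin_poly !big_cons big_nil mulr1 rmorphXn subr_sqr polyCN opprK. Qed.

Lemma size_twin_poly : size twin_poly = 3%N.
Proof. exact: size_prod_XsubC. Qed.

Lemma twin_poly_neq0 : twin_poly != 0.
Proof. by rewrite -size_poly_gt0 size_twin_poly. Qed.

Lemma l_neq_oppl : l != - l.
Proof. by rewrite -subr_eq0 opprK -mulr2n mulrn_eq0 /= gt_eqF. Qed.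

Lemma mem_roots_twin_poly x : (x \in roots twin_poly) = (x == l) || (x == - l).
Proof. by rewrite mem_roots ?twin_poly_neq0 // root_prod_XsubC !inE. Qed.

Lemma twin_poly_simple : simple_roots twin_poly.
Proof.
move=> z; rewrite /twin_poly root_prod_XsubC mu_prod_XsubC !inE.
have oppl_neq_l : - l != l by rewrite eq_sym l_neq_oppl.
by case/orP => /eqP ->; rewrite /= eqxx ?(negbTE l_neq_oppl) ?(negbTE oppl_neq_l).
Qed.

(* The only critical point is 0, so tau(X^2 - l^2) = l. *)
Lemma tau_twin_poly : tau twin_poly = l.
Proof.
have f'E : twin_poly^`() = 'X *+ 2 by rewrite twin_polyE derivB derivXn derivC subr0.
have f'n0 : twin_poly^`() != 0.
  by rewrite -size_poly_gt0 size_deriv_num size_twin_poly.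
have root_f' v : (v \in roots twin_poly^`()) = (v == 0).
  by rewrite mem_roots // rootE f'E hornerMn hornerX mulrn_eq0.
have lr : l \in roots twin_poly by rewrite mem_roots_twin_poly eqxx.
have r0 : 0 \in roots twin_poly^`() by rewrite root_f'.
have [z [v [zr vr ->]]] := tau_attained lr r0 (lt0r_neq0 l_gt0).
move: zr vr; rewrite mem_roots_twin_poly root_f' => /orP [] /eqP -> /eqP ->.
  by rewrite subr0 gtr0_norm.
by rewrite subr0 normrN gtr0_norm.
Qed.

Lemma Top_twin_poly n (alpha : nat -> C) : (2 <= n)%N ->
  Top n alpha twin_poly =
  'X^2 + (alpha 1%N *+ 2)%:P * 'X + (alpha 2%N *+ 2 - l ^+ 2)%:P.
Proof.
move=> n2; rewrite /Top big_ltn ?ltnS 1?ltnW // big_ltn //.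
rewrite big_nat_cond big1 ?addr0; last first.
  by move=> k /andP [/andP [k3 _] _]; rewrite derivn_poly0 ?scaler0 ?size_twin_poly.
rewrite twin_polyE derivn1 (derivnS _ 1) derivn1 !(derivB, derivXn, derivC) subr0.
rewrite /= subr0 expr1 derivMn derivX -!mul_polyC polyCB !polyCMn.
ring.
Qed.

End QuadraticExample.

Lemma monic_quadratic_split (C : numClosedFieldType) (b c : C) :
  exists w1 w2 : C,
    w1 + w2 = - b /\ 'X^2 + b%:P * 'X + c%:P = ('X - w1%:P) * ('X - w2%:P).
Proof.
set s := sqrtC (b ^+ 2 - 4%:R * c).
have n2 : (2%:R : C) != 0 by rewrite pnatr_eq0.
have hsq : (- b + s) * (- b - s) = 4%:R * c.
  by rewrite mulrC -subr_sqr sqrrN sqrtCK opprB addrC subrK.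
set w1 := (- b + s) / 2%:R; set w2 := (- b - s) / 2%:R.
have sumE : w1 + w2 = - b by rewrite /w1 /w2; field.
have prodE : w1 * w2 = c by rewrite /w1 /w2 mulrACA hsq; field.
exists w1, w2; split=> //; clearbody w1 w2.
have -> : b = - (w1 + w2) by rewrite sumE opprK.
by rewrite -prodE polyCN polyCD polyCM; ring.
Qed.

(* For l >= 2|a_1|, some root of T(X^2 - l^2) is at distance at least
   |a_1| from {l, -l}: the two roots of T f sum to -2 a_1. *)
Lemma RT_twin_poly_ge (C : numClosedFieldType) n (alpha : nat -> C) (l : C) :
  (2 <= n)%N -> 0 < l -> `|alpha 1%N| *+ 2 <= l ->
  `|alpha 1%N| <= RT n alpha (twin_poly l).
Proof.
move=> n2 l0 la; set a := `|alpha 1%N|; set f := twin_poly l.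
have [w1 [w2 [sumE TfE]]] :=
  monic_quadratic_split (alpha 1%N *+ 2) (alpha 2%N *+ 2 - l ^+ 2).
rewrite -(Top_twin_poly l alpha n2) -/f in TfE.
have Tfn0 : Top n alpha f != 0 by rewrite TfE mulf_neq0 ?polyXsubC_eq0.
have w1r : w1 \in roots (Top n alpha f).
  by rewrite mem_roots // TfE rootM root_XsubC eqxx.
have w2r : w2 \in roots (Top n alpha f).
  by rewrite mem_roots // TfE rootM !root_XsubC eqxx orbT.
have rfn : roots f != [::] by rewrite roots_neq_nil ?size_twin_poly.
have [z1 z1r d1] := distZ_attained w1 rfn.
have [z2 z2r d2] := distZ_attained w2 rfn.
have far v : `|v| = l *+ 2 -> a *+ 2 <= `|alpha 1%N *+ 2 + v|.
  move=> hv; rewrite addrC; apply: le_trans (lerB_normD _ _).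
  by rewrite hv normrMn -/a lerBrDr -mulr2n ler_pMn2r.
have key : a *+ 2 <= `|alpha 1%N *+ 2 + (z1 + z2)|.
  move: z1r z2r; rewrite !mem_roots_twin_poly // => /orP [] /eqP -> /orP [] /eqP ->.
  - by apply: far; rewrite -mulr2n normrMn gtr0_norm.
  - by rewrite subrr addr0 normrMn.
  - by rewrite addNr addr0 normrMn.
  - by apply: far; rewrite -mulr2n normrMn normrN gtr0_norm.
have dsum : a *+ 2 <= distZ w1 f + distZ w2 f.
  apply: le_trans key _; rewrite d1 d2 -normrN.
  have -> : - (alpha 1%N *+ 2 + (z1 + z2)) = (w1 - z1) + (w2 - z2).
    by rewrite [RHS]addrACA sumE !opprD.
  exact: ler_normD.
rewrite -(ler_pMn2r (_ : 0 < 2)%N) //; apply: le_trans dsum _.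
by rewrite mulr2n lerD ?distZ_le_RT.
Qed.

Lemma tau_RT_unbounded (C : numClosedFieldType) n (alpha : nat -> C) (Gamma : C) :
  (2 <= n)%N -> alpha 1%N != 0 -> 0 < Gamma ->
  exists f : {poly C}, [/\ (size f <= n.+1)%N, (3 <= size f)%N,
    simple_roots f & Gamma <= tau f * RT n alpha f].
Proof.
move=> n2 a1 G0; set a := `|alpha 1%N|; have a0 : 0 < a by rewrite normr_gt0.
set l := a *+ 2 + Gamma / a.
have la : a *+ 2 <= l by rewrite lerDl divr_ge0 ?ltW.
have l0 : 0 < l by apply: lt_le_trans la; rewrite mulrn_wgt0.
exists (twin_poly l); rewrite size_twin_poly; split=> //; first exact: twin_poly_simple.
rewrite tau_twin_poly //; apply: le_trans (_ : l * a <= _).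
  rewrite mulrDl divfK ?lt0r_neq0 // lerDr.
  by apply: mulr_ge0; rewrite ?mulrn_wge0 // ltW.
by apply: ler_wpM2l; [exact: ltW | exact: RT_twin_poly_ge].
Qed.

Theorem theorem3p1 (C : numClosedFieldType) (n : nat) (alpha : nat -> C) :
  (2 <= n)%N ->
  (alpha 1%N = 0 <->
   exists Gamma : C, 0 < Gamma /\
     forall f : {poly C}, (size f <= n.+1)%N -> (3 <= size f)%N ->
       simple_roots f -> tau f * RT n alpha f < Gamma).
Proof.
move=> n2; split=> [a1 | [Gamma [G0 bounded]]].
- exists (Gamma0 n alpha + 1); split; first by rewrite ltr_wpDl ?Gamma0_ge0.
  move=> f fn f3 fsimple; apply: le_lt_trans (_ : _ <= Gamma0 n alpha) _.
    apply: tau_RT_le => [|w wr]; first exact: Gamma0_ge0.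
    exact: tau_distZ_Top_le (roots_root wr).
  by rewrite ltrDl.
- apply/eqP; apply: contraT => a1.
  have [f [fn f3 fsimple Gle]] := tau_RT_unbounded n2 a1 G0.
  by have := lt_le_trans (bounded f fn f3 fsimple) Gle; rewrite ltxx.
Qed.
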